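(* Let $A$ be a minimally AP-irreducible sign pattern matrix of order $n$ with all diagonal entries equal to $0$. If $A[\alpha,\beta]$ contains no $+$ for any two distinct irreducible components $\alpha$ and $\beta$ of $A_+$, then $A$ has at most $2n-2$ nonzero entries. Consequently, at least two rows of $A$ and at least two columns of $A$ contain precisely one nonzero entry.
   Context: A sign pattern matrix has entries in $\{+,-,0\}$. The digraph $D(M)$ of an $n\times n$ matrix $M$ has vertex set $\{1,\dots,n\}$ and an arc $i\to j$ iff $m_{ij}\neq0$; $M$ is irreducible if $n=1$ or $D(M)$ is strongly connected. For a sign pattern $A$: $A_+$ is obtained by replacing every entry that is not $+$ by $0$; $A_-$ by replacing every entry that is not $-$ by $0$; $B_A=A_+-(A_-)^T$, i.e. $(B_A)_{ij}=+$ if $a_{ij}=+$ or $a_{ji}=-$, and $0$ otherwise. An irreducible sign pattern $A$ is AP-irreducible if every row and every column contains a $+$ and $B_A$ is irreducible; $A$ is minimally AP-irreducible if it is AP-irreducible and does not remain AP-irreducible after replacing any single nonzero entry by $0$. $A[\alpha,\beta]$ is the submatrix with rows in $\alpha$ and columns in $\beta$, $A[\alpha]=A[\alpha,\alpha]$. The irreducible components of a sign pattern $M$ of order $n$ are the pairwise disjoint nonempty sets partitioning $\{1,\dots,n\}$ that are maximal with respect to $M[\alpha]$ being irreducible (the vertex sets of the strongly connected components of $D(M)$). *)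

From mathcomp Require Import all_boot all_algebra.
Set Implicit Arguments. Unset Strict Implicit. Unset Printing Implicit Defensive.

Definition sign := option bool.
Definition spos : sign := Some true.
Definition sneg : sign := Some false.
Definition szero : sign := None.

Notation signpat n := ('M[sign]_n).

Definition digraph n (M : signpat n) : rel 'I_n := fun i j => M i j != szero.

Definition irreducible n (M : signpat n) : Prop :=
  n = 1%N \/ forall i j : 'I_n, connect (digraph M) i j.

Definition irreducible_on n (M : signpat n) (alpha : {set 'I_n}) : Prop :=
  #|alpha| = 1%N \/
  forall i j, i \in alpha -> j \in alpha ->
    connect [rel x y | [&& x \in alpha, y \in alpha & digraph M x y]] i j.

Definition irr_component n (M : signpat n) (alpha : {set 'I_n}) : Prop :=
  alpha != set0 /\ irreducible_on M alpha /\
  forall beta : {set 'I_n}, alpha \subset beta -> irreducible_on M beta -> beta = alpha.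

Definition pos_part n (A : signpat n) : signpat n :=
  \matrix_(i, j) (if A i j == spos then spos else szero).
Definition neg_part n (A : signpat n) : signpat n :=
  \matrix_(i, j) (if A i j == sneg then sneg else szero).
(* B_A = A_+ - (A_-)^T : (B_A)_ij = + iff a_ij = + or a_ji = -, else 0. *)
Definition BA n (A : signpat n) : signpat n :=
  \matrix_(i, j) (if (pos_part A i j == spos) || (trmx (neg_part A) i j == sneg)
                  then spos else szero).

Definition AP_irreducible n (A : signpat n) : Prop :=
  [/\ irreducible A,
      (forall i : 'I_n, exists j, A i j = spos),
      (forall j : 'I_n, exists i, A i j = spos) &
      irreducible (BA A)].

Definition zero_entry n (A : signpat n) (i j : 'I_n) : signpat n :=
  \matrix_(k, l) (if (k == i) && (l == j) then szero else A k l).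

Definition min_AP_irreducible n (A : signpat n) : Prop :=
  AP_irreducible A /\
  forall i j : 'I_n, A i j != szero -> ~ AP_irreducible (zero_entry A i j).

Definition nnz n (A : signpat n) : nat :=
  #|[set ij : 'I_n * 'I_n | A ij.1 ij.2 != szero]|.

Definition row_nnz n (A : signpat n) (i : 'I_n) : nat := #|[set j | A i j != szero]|.
Definition col_nnz n (A : signpat n) (j : 'I_n) : nat := #|[set i | A i j != szero]|.

From mathcomp Require Import all_boot all_algebra zify.
Set Implicit Arguments. Unset Strict Implicit. Unset Printing Implicit Defensive.

(* The hypothesis on A_+ forces every + entry to lie inside a strong component
   of D(A_+), so these k components are the classes of a symmetric
   connectivity relation. An out- and an in-branching of every component
   from a root use 2(n - k) positive entries and make each component
   strongly connected; an out- and an in-branching of the quotient digraph,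
   whose arcs all come from - entries, use 2(k - 1) more. Keeping only these
   2n - 2 entries gives a pattern B for which D(B) and the digraph of its B_B
   are both strongly connected (the - arcs of the latter are those of D(B)
   reversed), so B is AP-irreducible and minimality forces every nonzero
   entry of A into B. *)

Lemma connect_sub_rev (T : finType) (e e' : rel T) x y :
  (forall a b, e a b -> connect e' b a) -> connect e x y -> connect e' y x.
Proof.
move=> sub_e e_xy; have := connect_rev e' x y; rewrite /= => <-.
by apply: connect_sub e_xy => a b /sub_e; rewrite connect_rev.
Qed.

Lemma connect_exit (T : finType) (e : rel T) (U : {set T}) x y :
  x \in U -> y \notin U -> connect e x y ->
  exists a b, [/\ a \in U, b \notin U & e a b].
Proof.
move=> xU yU /connectP[p]; elim: p x xU => [|z p IHp] x xU /=.
  by move=> _ yx; rewrite yx xU in yU.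
case/andP=> exz pz yz; case: (boolP (z \in U)) => [zU | zU]; first exact: IHp zU pz yz.
by exists x, z.
Qed.

Definition quot_rel (T C : finType) (c : T -> C) (e : rel T) : rel T :=
  fun x y => (c x == c y) || e x y.

Definition arcs (T : finType) (S : {set T * T}) : rel T := fun x y => (x, y) \in S.

Section QuotientForest.
Variables (T C : finType) (c : T -> C) (e : rel T) (U0 : {set T}).

Definition saturated (U : {set T}) := forall x y, x \in U -> c x = c y -> y \in U.

Hypothesis U0_saturated : saturated U0.

(* [S] is an out-branching of the quotient of [e] by [c], spanning the classes
   of [U] and rooted at the classes of [U0]. *)
Definition forest_on (U : {set T}) (S : {set T * T}) :=
  [/\ U0 \subset U, forall p, p \in S -> e p.1 p.2 && (p.2 \in U),
      #|S| + #|c @: U0| = #|c @: U|, saturated U &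
      forall y, y \in U -> exists2 x, x \in U0 & connect (quot_rel c (arcs S)) x y].

Lemma forest_on0 : forest_on U0 set0.
Proof.
split=> //; first by move=> p; rewrite inE.
- by rewrite cards0.
- by move=> y yU0; exists y.
Qed.

Hypothesis U0_reaches : forall y, exists2 x, x \in U0 & connect (quot_rel c e) x y.

Lemma forest_on_grow U S y : forest_on U S -> y \notin U ->
  exists U', exists S', forest_on U' S' /\ #|U| < #|U'|.
Proof.
case=> U0U S_arcs S_card U_sat U_reached yU.
have [a [b [aU bU eab]]] : exists a b, [/\ a \in U, b \notin U & e a b].
  have [x0 x0U0 x0y] := U0_reaches y.
  have [a [b [aU bU /orP[/eqP cab | eab]]]] := connect_exit (subsetP U0U _ x0U0) yU x0y.
    by rewrite (U_sat a b aU cab) in bU.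
  by exists a, b.
pose U' := U :|: [set z | c z == c b]; pose S' := (a, b) |: S.
have bU' : b \in U' by rewrite !inE eqxx orbT.
have sub_S' : subrel (connect (quot_rel c (arcs S))) (connect (quot_rel c (arcs S'))).
  apply: connect_sub => u v /orP[cuv | uv]; apply: connect1.
    by rewrite /quot_rel cuv.
  by apply/orP; right; rewrite /arcs !inE; apply/orP; right.
exists U', S'; split; last first.
  apply: proper_card; apply/properP; split; last by exists b.
  by apply/subsetP => z zU; rewrite inE zU.
split.
- by apply: subset_trans U0U _; apply/subsetP => z zU; rewrite inE zU.
- move=> p; rewrite !inE => /orP[/eqP -> | pS] /=; first by rewrite eab eqxx orbT.
  by case/andP: (S_arcs p pS) => -> pU; rewrite pU.
- have cbU : c b \notin c @: U.
    by apply/imsetP => [[z zU cbz]]; rewrite (U_sat z b zU (esym cbz)) in bU.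
  have abS : (a, b) \notin S by apply/negP => /S_arcs /andP[_ /= bU1]; rewrite bU1 in bU.
  have -> : c @: U' = c b |: c @: U.
    apply/setP => w; rewrite imsetU !inE orbC; congr (_ || _).
    apply/imsetP/eqP => [[z] | ->]; first by rewrite inE => /eqP <- ->.
    by exists b; rewrite ?inE.
  by rewrite !cardsU1 cbU abS addSn S_card.
- move=> z w; rewrite !inE => /orP[zU | /eqP czb] czw; first by rewrite (U_sat z w zU czw).
  by rewrite -czw czb eqxx orbT.
- move=> w; rewrite !inE => /orP[wU | /eqP cwb].
    by have [x0 x0U0 x0w] := U_reached w wU; exists x0 => //; apply: sub_S'.
  have [x0 x0U0 x0a] := U_reached a aU; exists x0 => //.
  apply: connect_trans (sub_S' _ _ x0a) _; apply: (@connect_trans _ _ b).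
    by apply: connect1; rewrite /quot_rel /arcs !inE eqxx orbT.
  by apply: connect1; rewrite /quot_rel cwb eqxx.
Qed.

Lemma exists_quotient_forest : exists S : {set T * T},
  [/\ subrel (arcs S) e, #|S| + #|c @: U0| = #|c @: [set: T]| &
      forall y, exists2 x, x \in U0 & connect (quot_rel c (arcs S)) x y].
Proof.
suff [S [_ S_arcs S_card _ S_reached]] : exists S, forest_on [set: T] S.
  exists S; split=> [a b /S_arcs /andP[] | | y] //; exact: S_reached.
suff grow : forall k U S, forest_on U S -> #|T| - #|U| < k ->
    exists S, forest_on [set: T] S.
  exact: grow _ _ _ forest_on0 (ltnSn _).
elim=> [// | k IHk] U S US ltk.
case: (pickP [pred y | y \notin U]) => [y yU | U_full].
  have [U' [S' [U'S' ltUU']]] := forest_on_grow US yU.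
  by apply: IHk U'S' _; have := max_card U'; lia.
suff -> : [set: T] = U by exists S.
by apply/setP => z; rewrite inE; apply/esym/negbFE/U_full.
Qed.

End QuotientForest.

Lemma exists_quotient_skeleton (T C : finType) (c : T -> C) (e : rel T) (U0 : {set T}) :
  saturated c U0 ->
  (forall y, exists2 x, x \in U0 & connect (quot_rel c e) x y) ->
  (forall y, exists2 x, x \in U0 & connect (quot_rel c e) y x) ->
  exists S : {set T * T},
    [/\ subrel (arcs S) e,
        #|S| + 2 * #|c @: U0| <= 2 * #|c @: [set: T]|,
        forall y, exists2 x, x \in U0 & connect (quot_rel c (arcs S)) x y &
        forall y, exists2 x, x \in U0 & connect (quot_rel c (arcs S)) y x].
Proof.
move=> U0_sat U0_reaches reaches_U0.
have [Sout [out_arcs out_card out_reached]] := exists_quotient_forest U0_sat U0_reaches.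
have U0_reaches_rev y : exists2 x, x \in U0 & connect (quot_rel c [rel a b | e b a]) x y.
  have [x xU0 yx] := reaches_U0 y; exists x => //.
  apply: connect_sub_rev yx => a b /orP[cab | eab]; apply: connect1.
    by rewrite /quot_rel eq_sym cab.
  by rewrite /quot_rel /= eab orbT.
have [Sin [in_arcs in_card in_reached]] := exists_quotient_forest U0_sat U0_reaches_rev.
pose S := Sout :|: swap_pair @: Sin.
have S_quot : forall a b, quot_rel c (arcs Sout) a b -> quot_rel c (arcs S) a b.
  by move=> a b; rewrite /quot_rel /arcs inE => /orP[-> // | ->]; rewrite orbT.
exists S; split.
- move=> a b; rewrite /arcs inE => /orP[/out_arcs // | /imsetP[[u v] /in_arcs vu [-> ->]]] //.
- have S_card : #|S| <= #|Sout| + #|Sin|.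
    by rewrite cardsU (card_imset _ (can_inj swap_pairK)) leq_subr.
  apply: leq_trans (leq_add S_card (leqnn _)) _.
  by rewrite !mul2n -!addnn addnACA out_card in_card.
- move=> y; have [x xU0 xy] := out_reached y; exists x => //.
  by apply: connect_sub xy => a b /S_quot; apply: connect1.
- move=> y; have [x xU0 xy] := in_reached y; exists x => //.
  apply: connect_sub_rev xy => a b /orP[cab | ab]; apply: connect1.
    by rewrite /quot_rel eq_sym cab.
  by apply/orP; right; rewrite /arcs inE; apply/orP; right; apply/imsetP; exists (a, b).
Qed.

Lemma card_rel_sum_row (T : finType) (P : rel T) :
  #|[set p : T * T | P p.1 p.2]| = \sum_x #|[set y | P x y]|.
Proof.
rewrite (eq_bigr (fun x => \sum_(y in [set y | P x y]) 1)) => [|x _]; last first.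
  by rewrite sum1_card.
by rewrite pair_big_dep -sum1_card; apply: eq_bigl => p; rewrite !inE.
Qed.

Lemma card_rel_sum_col (T : finType) (P : rel T) :
  #|[set p : T * T | P p.1 p.2]| = \sum_y #|[set x | P x y]|.
Proof.
rewrite -(card_imset _ (can_inj swap_pairK)) -(card_rel_sum_row (fun y x => P x y)).
apply: eq_card => p; rewrite !inE.
apply/imsetP/idP => [[q] | Pp]; first by rewrite inE => Pq ->.
by exists (swap_pair p); rewrite ?inE // swap_pairK.
Qed.

Lemma card_eq1_gt1 n (f : 'I_n -> nat) : 0 < n ->
  (forall i, 0 < f i) -> \sum_i f i <= 2 * n - 2 -> 1 < #|[set i | f i == 1]|.
Proof.
move=> n_gt0 f_gt0 f_sum.
suff : 2 * n <= \sum_i f i + #|[set i | f i == 1]| by lia.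
have -> : #|[set i | f i == 1]| = \sum_i (f i == 1 : nat).
  by rewrite -sum1_card big_mkcond; apply: eq_bigr => i _; rewrite inE; case: (_ == _).
rewrite -big_split /= -[n in 2 * n]card_ord [2 * _]mulnC -sum_nat_const.
by apply: leq_sum => i _; have := f_gt0 i; case: (f i) => [|[|m]].
Qed.

Section SignPatterns.
Variable n : nat.
Implicit Types M B : signpat n.

Lemma digraph_pos_part M x y : digraph (pos_part M) x y = (M x y == spos).
Proof. by rewrite /digraph mxE; case: (M x y) => [[]|]. Qed.

Lemma digraph_BA M x y : digraph (BA M) x y = (M x y == spos) || (M y x == sneg).
Proof. by rewrite /digraph !mxE; case: (M x y) => [[]|]; case: (M y x) => [[]|]. Qed.

Lemma irreducible_connect M : irreducible M -> forall x y, connect (digraph M) x y.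
Proof.
case=> [n1 x y | //]; apply: eq_connect0; apply: ord_inj.
by have := ltn_ord x; have := ltn_ord y; lia.
Qed.

Lemma irreducible_sub M B :
  (forall i j, M i j != szero -> B i j != szero) -> irreducible M -> irreducible B.
Proof.
move=> MB [n1 | M_conn]; [by left | right => x y].
by apply: connect_sub (M_conn x y) => a b /MB; apply: connect1.
Qed.

Lemma AP_irreducible_sub M B :
  (forall i j, M i j != szero -> B i j = M i j) -> AP_irreducible M -> AP_irreducible B.
Proof.
move=> MB [M_irr M_rows M_cols BA_irr]; split.
- by apply: irreducible_sub M_irr => i j Mij; rewrite MB.
- by move=> i; have [j Mij] := M_rows i; exists j; rewrite MB Mij.
- by move=> j; have [i Mij] := M_cols j; exists i; rewrite MB Mij.
apply: irreducible_sub BA_irr => i j.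
rewrite -!/(digraph _ i j) !digraph_BA.
case/orP=> /eqP Mij; first by rewrite MB Mij.
by rewrite (MB j i) Mij ?orbT.
Qed.

Lemma nnz_min_AP_irreducible M B : min_AP_irreducible M -> AP_irreducible B ->
  (forall i j, B i j != szero -> B i j = M i j) -> nnz M <= nnz B.
Proof.
move=> [_ M_min] B_AP BM; apply: subset_leq_card; apply/subsetP => -[i j].
rewrite !inE /= => Mij; apply/negP => /eqP Bij.
apply: (M_min i j Mij); apply: AP_irreducible_sub B_AP => k l Bkl.
rewrite mxE; case: ifP => [/andP[/eqP ki /eqP lj] | _]; last by rewrite BM.
by rewrite ki lj Bij eqxx in Bkl.
Qed.

Definition mask_mx M (H : {set 'I_n * 'I_n}) : signpat n :=
  \matrix_(i, j) if (i, j) \in H then M i j else szero.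

Lemma nnz_mask_mx M H : nnz (mask_mx M H) <= #|H|.
Proof.
apply: subset_leq_card; apply/subsetP => -[i j].
by rewrite !inE mxE /=; case: ifP; rewrite ?eqxx.
Qed.

Lemma mask_mx_sub M H i j : mask_mx M H i j != szero -> mask_mx M H i j = M i j.
Proof. by rewrite mxE; case: ifP; rewrite ?eqxx. Qed.

Lemma digraph_pos_part_sub M : subrel (digraph (pos_part M)) (digraph M).
Proof. by move=> x y; rewrite digraph_pos_part /digraph => /eqP ->. Qed.

Lemma digraph_pos_part_BA M : subrel (digraph (pos_part M)) (digraph (BA M)).
Proof. by move=> x y; rewrite digraph_pos_part digraph_BA => ->. Qed.

End SignPatterns.

Section StrongComponents.
Variables (n : nat) (M : signpat n).
Local Notation dM := (digraph M).

Definition scc x : {set 'I_n} := [set y | connect dM x y && connect dM y x].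

Lemma scc_irreducible_on x : irreducible_on M (scc x).
Proof.
right=> i j; rewrite !inE => /andP[xi ix] /andP[xj jx].
have /connectP[p] : connect dM i j by apply: connect_trans ix xj.
elim: p i xi ix => [|z p IHp] i xi ix /=; first by move=> _ ->.
case/andP=> iz zp j_last.
have xz : connect dM x z := connect_trans xi (connect1 iz).
have zx : connect dM z x.
  by apply: connect_trans jx; apply/connectP; exists p.
apply: connect_trans (IHp z xz zx zp j_last).
by apply: connect1; rewrite /= !inE xi ix xz zx iz.
Qed.

Lemma scc_irr_component x : irr_component M (scc x).
Proof.
have xx : x \in scc x by rewrite inE connect0.
split; first by apply/set0Pn; exists x.
split; first exact: scc_irreducible_on.
move=> beta sub_beta [beta1 | beta_conn].
  apply/eqP; rewrite eq_sym eqEcard sub_beta beta1 card_gt0.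
  by apply/set0Pn; exists x.
have xb : x \in beta := subsetP sub_beta x xx.
have in_beta a b :
    connect [rel u v | [&& u \in beta, v \in beta & dM u v]] a b -> connect dM a b.
  by apply: connect_sub => u v /and3P[_ _ uv]; apply: connect1.
apply/eqP; rewrite eqEsubset sub_beta andbT; apply/subsetP => z zb.
by rewrite inE !in_beta ?beta_conn.
Qed.

End StrongComponents.

Lemma connect_sym_pos_part n (A : signpat n) :
  (forall alpha beta : {set 'I_n},
      irr_component (pos_part A) alpha -> irr_component (pos_part A) beta ->
      alpha != beta -> forall i j, i \in alpha -> j \in beta -> A i j != spos) ->
  connect_sym (digraph (pos_part A)).
Proof.
move=> cross; apply: symmetric_from_pre => x y.
apply: connect_sub_rev => a b; rewrite digraph_pos_part => /eqP Aab.
apply/negPn/negP => ba.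
have neq_ab : scc (pos_part A) a != scc (pos_part A) b.
  apply/negP => /eqP eq_ab; have : b \in scc (pos_part A) a by rewrite eq_ab inE connect0.
  by rewrite inE (negbTE ba) andbF.
have := cross _ _ (scc_irr_component _ a) (scc_irr_component _ b) neq_ab a b.
by rewrite Aab !inE !connect0 eqxx => /(_ isT isT).
Qed.

Section Skeleton.
Variables (n : nat) (A : signpat n) (r : 'I_n).
Hypotheses (A_irr : irreducible A) (A_diag : forall i, A i i = szero)
  (A_rows : forall i, exists j, A i j = spos) (A_cols : forall j, exists i, A i j = spos)
  (pos_sym : connect_sym (digraph (pos_part A))).
Local Notation dP := (digraph (pos_part A)).
(* Qualified because [root] alone is the polynomial predicate of poly.v. *)
Local Notation comp_root := (fingraph.root dP).

Lemma exists_pos_skeleton : exists Hp : {set 'I_n * 'I_n},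
  [/\ forall a b, (a, b) \in Hp -> A a b = spos, #|Hp| + 2 * #|roots dP| <= 2 * n &
      forall x y, connect dP x y -> connect (arcs Hp) x y].
Proof.
pose R := [set x in roots dP].
have R_sat : saturated id R by move=> x y xR <-.
have dP_quot a b : connect dP a b -> connect (quot_rel id dP) a b.
  by apply: connect_sub => u v uv; apply: connect1; rewrite /quot_rel uv orbT.
have [S [S_pos S_card S_from S_to]] : exists S : {set 'I_n * 'I_n},
    [/\ subrel (arcs S) dP, #|S| + 2 * #|id @: R| <= 2 * #|id @: [set: 'I_n]|,
        forall y, exists2 x, x \in R & connect (quot_rel id (arcs S)) x y &
        forall y, exists2 x, x \in R & connect (quot_rel id (arcs S)) y x].
  apply: exists_quotient_skeleton R_sat _ _ => y; exists (comp_root y);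
    rewrite ?inE ?roots_root // dP_quot // ?connect_root //.
  by rewrite pos_sym connect_root.
have S_dP a b : connect (quot_rel id (arcs S)) a b -> connect dP a b.
  apply: connect_sub => u v /orP[/eqP -> // | uv].
  exact/connect1/S_pos.
have S_arcs a b : connect (quot_rel id (arcs S)) a b -> connect (arcs S) a b.
  by apply: connect_sub => u v /orP[/eqP -> // | uv]; apply: connect1.
exists S; split.
- by move=> a b /S_pos; rewrite digraph_pos_part => /eqP.
- by move: S_card; rewrite !imset_id cardsT card_ord cardsE.
move=> x y xy; have [rho rhoR rho_y] := S_from y; have [rho' rho'R x_rho'] := S_to x.
suff eq_rho : rho' = rho by apply: connect_trans (S_arcs _ _ x_rho') _; rewrite eq_rho S_arcs.
move: rhoR rho'R; rewrite !inE => /eqP rho_root /eqP rho'_root.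
rewrite -rho_root -rho'_root; apply/eqP; rewrite (root_connect pos_sym).
have y_rho : connect dP y rho by rewrite pos_sym S_dP.
have rho'_x : connect dP rho' x by rewrite pos_sym S_dP.
exact: connect_trans rho'_x (connect_trans xy y_rho).
Qed.

Local Notation quot_neg H := (quot_rel comp_root (arcs H)).

Lemma exists_neg_skeleton : exists Hn : {set 'I_n * 'I_n},
  [/\ forall a b, (a, b) \in Hn -> A a b = sneg, #|Hn| + 2 <= 2 * #|roots dP| &
      forall y, connect (quot_neg Hn) r y /\ connect (quot_neg Hn) y r].
Proof.
pose U0 := [set x | comp_root x == comp_root r].
have U0_sat : saturated comp_root U0 by move=> x y; rewrite !inE => + <-.
have rU0 : r \in U0 by rewrite inE.
have A_quot a b : connect (digraph A) a b ->
    connect (quot_rel comp_root (fun u v => A u v == sneg)) a b.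
  apply: connect_sub => u v; rewrite /digraph => uv; apply: connect1.
  rewrite /quot_rel (root_connect pos_sym).
  by case E : (A u v) uv => [[]|] //= _; rewrite ?orbT // connect1 // digraph_pos_part E.
have A_conn := irreducible_connect A_irr.
have [S [S_neg S_card S_from S_to]] := exists_quotient_skeleton U0_sat
  (fun y => ex_intro2 _ _ r rU0 (A_quot _ _ (A_conn r y)))
  (fun y => ex_intro2 _ _ r rU0 (A_quot _ _ (A_conn y r))).
have r_U0 x : x \in U0 -> quot_neg S r x /\ quot_neg S x r.
  by rewrite inE /quot_rel => /eqP ->; rewrite eqxx.
exists S; split.
- by move=> a b /S_neg /eqP.
- have U0_img : comp_root @: U0 = [set comp_root r].
    apply/setP => z; rewrite !inE; apply/imsetP/eqP => [[x] | ->]; last by exists r.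
    by rewrite inE => /eqP <- ->.
  have T_img : comp_root @: [set: 'I_n] = [set x in roots dP].
    apply/setP => z; rewrite !inE; apply/imsetP/idP => [[x _ ->] | /eqP <-].
      exact: roots_root.
    by exists z.
  by rewrite U0_img T_img cards1 cardsE in S_card.
move=> y; split.
  have [x /r_U0[rx _] xy] := S_from y; exact: connect_trans (connect1 rx) xy.
have [x /r_U0[_ xr] yx] := S_to y; exact: connect_trans yx (connect1 xr).
Qed.

Section Mask.
Variables (Hp Hn : {set 'I_n * 'I_n}).
Hypotheses (Hp_pos : forall a b, (a, b) \in Hp -> A a b = spos)
  (Hp_conn : forall x y, connect dP x y -> connect (arcs Hp) x y)
  (Hn_neg : forall a b, (a, b) \in Hn -> A a b = sneg)
  (Hn_conn : forall y, connect (quot_neg Hn) r y /\ connect (quot_neg Hn) y r).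
Local Notation B := (mask_mx A (Hp :|: Hn)).

Lemma mask_connect_pos x y : connect dP x y -> connect (digraph (pos_part B)) x y.
Proof.
move/Hp_conn; apply: connect_sub => a b; rewrite /arcs => ab; apply: connect1.
by rewrite digraph_pos_part mxE inE ab (Hp_pos ab).
Qed.

Lemma mask_connect x y : connect (quot_neg Hn) x y -> connect (digraph B) x y.
Proof.
apply: connect_sub => a b; rewrite /quot_rel /arcs => /orP[| ab].
  rewrite (root_connect pos_sym) => /mask_connect_pos.
  by apply: connect_sub => u v /digraph_pos_part_sub; apply: connect1.
by apply: connect1; rewrite /digraph mxE inE ab orbT (Hn_neg ab).
Qed.

Lemma mask_connect_BA x y : connect (quot_neg Hn) x y -> connect (digraph (BA B)) y x.
Proof.
apply: connect_sub_rev => a b; rewrite /quot_rel /arcs => /orP[| ab].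
  rewrite (root_connect pos_sym) pos_sym => /mask_connect_pos.
  by apply: connect_sub => u v /digraph_pos_part_BA; apply: connect1.
by apply: connect1; rewrite digraph_BA [B a b]mxE inE ab orbT (Hn_neg ab) eqxx orbT.
Qed.

Lemma AP_irreducible_mask : AP_irreducible B.
Proof.
have pos_path i j : A i j = spos -> connect (digraph (pos_part B)) i j.
  by move=> Aij; apply: mask_connect_pos; apply: connect1; rewrite digraph_pos_part Aij.
have neq_pos i j : A i j = spos -> i != j.
  by move=> Aij; apply/eqP => eq_ij; move: Aij; rewrite eq_ij A_diag.
split.
- right=> x y.
  exact: connect_trans (mask_connect (Hn_conn x).2) (mask_connect (Hn_conn y).1).
- move=> i; have [j Aij] := A_rows i.
  have j_out : j \notin [set i] by rewrite inE eq_sym neq_pos.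
  have [a [b [/set1P -> _]]] := connect_exit (set11 i) j_out (pos_path _ _ Aij).
  by rewrite digraph_pos_part => /eqP; exists b.
- move=> j; have [i Aij] := A_cols j.
  have i_in : i \in [set~ j] by rewrite in_setC1 neq_pos.
  have [a [b [_ ]]] := connect_exit i_in (negbT (setC11 j)) (pos_path _ _ Aij).
  by rewrite in_setC1 negbK => /eqP ->; rewrite digraph_pos_part => /eqP; exists a.
- right=> x y.
  exact: connect_trans (mask_connect_BA (Hn_conn x).1) (mask_connect_BA (Hn_conn y).2).
Qed.

End Mask.

Lemma exists_AP_skeleton :
  exists H : {set 'I_n * 'I_n}, #|H| <= 2 * n - 2 /\ AP_irreducible (mask_mx A H).
Proof.
have [Hp [Hp_pos Hp_card Hp_conn]] := exists_pos_skeleton.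
have [Hn [Hn_neg Hn_card Hn_conn]] := exists_neg_skeleton.
exists (Hp :|: Hn); split; last exact: AP_irreducible_mask.
by rewrite cardsU; lia.
Qed.

End Skeleton.

Theorem lemma3p11 (n : nat) (A : 'M[sign]_n) :
  (0 < n)%N ->
  min_AP_irreducible A ->
  (forall i : 'I_n, A i i = szero) ->
  (forall alpha beta : {set 'I_n},
      irr_component (pos_part A) alpha -> irr_component (pos_part A) beta ->
      alpha != beta ->
      forall i j, i \in alpha -> j \in beta -> A i j != spos) ->
  (nnz A <= 2 * n - 2)%N /\
  (1 < #|[set i : 'I_n | row_nnz A i == 1%N]|)%N /\
  (1 < #|[set j : 'I_n | col_nnz A j == 1%N]|)%N.
Proof.
move=> n_gt0 A_min A_diag A_cross.
have [[A_irr A_rows A_cols _] _] := A_min.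
have [H [H_card B_AP]] := exists_AP_skeleton (Ordinal n_gt0) A_irr A_diag A_rows A_cols
  (connect_sym_pos_part A_cross).
have nnz_A : nnz A <= 2 * n - 2.
  apply: leq_trans (nnz_min_AP_irreducible A_min B_AP (@mask_mx_sub _ _ _)) _.
  exact: leq_trans (nnz_mask_mx A H) H_card.
split=> //; split; apply: card_eq1_gt1 => //.
- move=> i; have [j Aij] := A_rows i.
  by rewrite card_gt0; apply/set0Pn; exists j; rewrite inE Aij.
- by rewrite -card_rel_sum_row.
- move=> j; have [i Aij] := A_cols j.
  by rewrite card_gt0; apply/set0Pn; exists i; rewrite inE Aij.
- by rewrite -card_rel_sum_col.
Qed.
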